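(* Let $k\ge 2$ be an integer such that the trinomial $T_k(x)=x^k+x+1$ is primitive over $\mathbb{F}_2$, and let $M_k$ be the binary cyclic word defined in the context. Then $\operatorname{cBWT}(M_k)=1\,(0011)^{2^{k-2}-1}\,010$.
   Context: Define $F:\{0,1\}^k\to\{0,1\}^k$ by $F(x_0,\dots,x_{k-1})=(x_1,\dots,x_{k-1},x_0\oplus x_1)$ (the Fibonacci-form linear-feedback shift register of the recurrence $s_{t+k}=s_{t+1}\oplus s_t$ induced by $T_k$). Define $F'$ to agree with $F$ except that $F'(0^k)=0^{k-1}1$ and $F'(10^{k-1})=0^k$ (the successors of the conjugate pair $0^k,10^{k-1}$ are swapped). Since $T_k$ is primitive, $F'$ is a single cycle on all $2^k$ states. Choose any state $x_0$, set $x_{t+1}=F'(x_t)$, and let $w$ be the cyclic binary word of length $2^k$ with $w[t]$ equal to the first coordinate of $x_t$ ($w$ is a binary de Bruijn cycle of order $k$: every word of $\{0,1\}^k$ occurs exactly once as a cyclic window). $M_k$ is the cyclic word obtained from $w$ by reversing it and then complementing every bit ($0\leftrightarrow1$). For a word $u$ of length $n$, $\operatorname{cBWT}(u)$ is the last column of the $n\times n$ matrix whose rows are the $n$ cyclic rotations of $u$ sorted lexicographically (with $0<1$); it depends only on the cycle. *)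

From mathcomp Require Import all_boot all_algebra.
Set Implicit Arguments. Unset Strict Implicit. Unset Printing Implicit Defensive.
Import GRing.Theory.
Local Open Scope ring_scope.

Definition trinomial (k : nat) : {poly 'F_2} := 'X^k + 'X + 1.

(* A polynomial p of degree k over F_2 is primitive: it is irreducible and
   its root (the class of X in F_2[X]/(p)) has multiplicative order 2^k - 1,
   i.e. X^(2^k-1) = 1 mod p and X^m <> 1 mod p for 0 < m < 2^k - 1. *)
Definition primitive_poly (p : {poly 'F_2}) : Prop :=
  let k := (size p).-1 in
  [/\ irreducible_poly p,
      ('X^(2 ^ k - 1) %% p = 1 %% p) &
      (forall m : nat, (0 < m)%N -> (m < 2 ^ k - 1)%N -> 'X^m %% p != 1 %% p)].

Local Close Scope ring_scope.

Definition lfsr (x : seq bool) : seq bool :=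
  rcons (behead x) (addb (nth false x 0) (nth false x 1)).

Definition lfsr' (k : nat) (x : seq bool) : seq bool :=
  if x == nseq k false then rcons (nseq k.-1 false) true
  else if x == true :: nseq k.-1 false then nseq k false
  else lfsr x.

Definition dbword (k : nat) (x0 : seq bool) : seq bool :=
  [seq nth false (iter t (lfsr' k) x0) 0 | t <- iota 0 (2 ^ k)].

Definition Mk (k : nat) (x0 : seq bool) : seq bool :=
  map negb (rev (dbword k x0)).

Fixpoint lexle (u v : seq bool) : bool :=
  match u, v with
  | [::], _ => true
  | _ :: _, [::] => false
  | a :: u', b :: v' => if a == b then lexle u' v' else (~~ a) && b
  end.

Definition cBWT (u : seq bool) : seq bool :=
  [seq last false r | r <- sort lexle [seq rot i u | i <- iota 0 (size u)]].

Definition cbwt_target (k : nat) : seq bool :=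
  [:: true] ++ flatten (nseq (2 ^ (k - 2) - 1) [:: false; false; true; true])
  ++ [:: false; true; false].

(* Primitivity of T_k makes the register F run through all 2^k - 1 nonzero
   states in a single cycle: the bits produced from a state x are the values at
   X^t of a linear form on F_2[X]/(T_k) attached to x, and X has order 2^k - 1
   modulo T_k.  Swapping the successors of 0^k and 10^(k-1) splices 0^k into
   this cycle, so F' is one cycle through all 2^k states and w, hence M_k, is a
   de Bruijn word: the length-k windows of M_k are the reverse complements of
   the states of F'.  For a de Bruijn word of order k, sorting the rotations
   amounts to sorting their length-k prefixes, so cBWT(M_k) lists, for the
   words u of length k in lexicographic order, the letter preceding u in M_k.
   That letter is the complement of the bit F' appends to the reverse
   complement of u: the xnor of the last two bits of u, except for u = 1^k and
   u = 1^(k-1)0 where the swap acts. *)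

From HB Require Import structures.
From mathcomp Require Import all_boot all_algebra.
From mathcomp Require Import zify ring.

Set Implicit Arguments.
Unset Strict Implicit.
Unset Printing Implicit Defensive.

Import GRing.Theory.

(** * Lexicographic order and the cBWT of de Bruijn words *)

Lemma lexle_total : total lexle.
Proof.
elim=> [|a u IH] [|b v] //=; case: eqP => [->|ab]; first by rewrite eqxx; exact: IH.
by rewrite eq_sym; case: eqP => // _; case: a b ab => [] [].
Qed.

Lemma lexle_trans : transitive lexle.
Proof.
move=> v u w; elim: u v w => [|a u IH] [|b v] [|c w] //=.
by case: a; case: b; case: c => //=; apply: IH.
Qed.

Lemma lexle_anti : antisymmetric lexle.
Proof.
elim=> [|a u IH] [|b v] //=; case: a; case: b => //= /andP [le_uv le_vu];
  by rewrite (IH v) // le_uv le_vu.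
Qed.

Definition lexlt (u v : seq bool) := (u != v) && lexle u v.

Lemma lexlt_cat u v s t : size u = size v -> lexlt u v -> lexle (u ++ s) (v ++ t).
Proof.
rewrite /lexlt; elim: u v => [|a u IH] [|b v] //= [size_uv].
case: (a =P b) => [->|_]; last by case/and3P => _ -> ->.
by rewrite eqseq_cons eqxx; exact: IH.
Qed.

Fixpoint words (k : nat) : seq (seq bool) :=
  if k is k'.+1 then map (cons false) (words k') ++ map (cons true) (words k')
  else [:: [::]].

Lemma size_words k : size (words k) = 2 ^ k.
Proof. by elim: k => //= k IH; rewrite size_cat !size_map IH expnS mul2n addnn. Qed.

Lemma size_mem_words k u : u \in words k -> size u = k.
Proof.
elim: k u => [|k IH] u /=; first by rewrite inE => /eqP ->.
by rewrite mem_cat => /orP [] /mapP [v /IH <- ->].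
Qed.

Lemma mem_words u : u \in words (size u).
Proof.
elim: u => [|a u IH] //=; rewrite mem_cat.
by case: a; apply/orP; [right|left]; apply: map_f.
Qed.

Lemma pairwise_lexlt_words k : pairwise lexlt (words k).
Proof.
elim: k => //= k IH; rewrite pairwise_cat !pairwise_map allrel_mapl allrel_mapr.
have cons_lt b : pairwise (relpre (cons b) lexlt) (words k).
  by apply: sub_pairwise IH => u v; case: b; rewrite /lexlt /= eqseq_cons.
by rewrite !cons_lt !andbT; apply/allrelP.
Qed.

Lemma uniq_words k : uniq (words k).
Proof. by apply: pairwise_uniq (pairwise_lexlt_words k) => u; rewrite /lexlt eqxx. Qed.

Lemma perm_words k (s : seq (seq bool)) :
  uniq s -> size s = 2 ^ k -> {in s, forall u, size u = k} -> perm_eq s (words k).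
Proof.
move=> s_uniq s_size s_sized; apply: uniq_perm => //; first exact: uniq_words.
have sub_s : {subset s <= words k} by move=> u /s_sized <-; apply: mem_words.
by have [] := uniq_min_size s_uniq sub_s; rewrite size_words s_size.
Qed.

Lemma cBWTE (M : seq bool) (L : seq (seq bool)) :
  perm_eq L [seq rot p M | p <- iota 0 (size M)] -> sorted lexle L ->
  cBWT M = map (last false) L.
Proof.
move=> L_rots L_sorted; rewrite -(sorted_sort lexle_trans L_sorted).
by rewrite /cBWT (perm_sortP lexle_total lexle_trans lexle_anti _ _ L_rots).
Qed.

Lemma cBWT_de_bruijn k (M : seq bool) (h : seq bool -> bool) :
  size M = 2 ^ k -> uniq [seq take k (rot p M) | p <- iota 0 (size M)] ->
  (forall p, p < size M -> h (take k (rot p M)) = last false (rot p M)) ->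
  cBWT M = map h (words k).
Proof.
set win := [seq take k (rot p M) | p <- iota 0 (size M)] => M_size win_uniq h_last.
have size_win : size win = size M by rewrite size_map size_iota.
have win_words : perm_eq win (words k).
  apply: perm_words; rewrite ?size_win // => _ /mapP [p _ ->].
  by rewrite size_take size_rot M_size ltn_expl.
pose pos u := index u win.
have pos_win : map pos win = iota 0 (size M).
  apply: (@eq_from_nth _ 0); rewrite size_map size_win ?size_iota // => p p_lt.
  by rewrite (nth_map [::]) ?size_win // /pos index_uniq ?size_win // nth_iota.
have pos_lt u : u \in win -> pos u < size M by rewrite -size_win index_mem.
have win_pos u : u \in words k -> take k (rot (pos u) M) = u.
  rewrite -(perm_mem win_words) => u_win.
  rewrite -{2}(nth_index [::] u_win) (nth_map 0) ?size_iota ?pos_lt //.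
  by rewrite nth_iota ?pos_lt.
rewrite (@cBWTE M [seq rot (pos u) M | u <- words k]).
- rewrite -map_comp; apply/eq_in_map => u u_w /=.
  by rewrite -h_last ?win_pos ?pos_lt ?(perm_mem win_words).
- rewrite -pos_win (map_comp (rot^~ M) pos).
  by apply/perm_map/perm_map; rewrite perm_sym.
- apply: pairwise_sorted; rewrite pairwise_map.
  apply: sub_in_pairwise (allss (words k)) (pairwise_lexlt_words k) => u v u_w v_w lt_uv /=.
  rewrite -(cat_take_drop k (rot (pos u) M)) -(cat_take_drop k (rot (pos v) M)).
  rewrite (win_pos u u_w) (win_pos v v_w); apply: lexlt_cat => //.
  by rewrite (size_mem_words u_w) (size_mem_words v_w).
Qed.

(** * The last column of cBWT(M_k) *)

Definition xnor_last2 (u : seq bool) : bool :=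
  ~~ (nth false u (size u).-1 (+) nth false u (size u).-2).

(* The letter preceding the window u in M_k (bwt_bit_window_Mk); the two
   exceptions come from the swap in F'. *)
Definition bwt_bit (u : seq bool) : bool :=
  if u == nseq (size u) true then false
  else if u == rcons (nseq (size u).-1 true) false then true
  else xnor_last2 u.

Lemma xnor_last2_cons b u : 2 <= size u -> xnor_last2 (b :: u) = xnor_last2 u.
Proof. by rewrite /xnor_last2 /=; case: (size u) => [|[|m]]. Qed.

Lemma bwt_bit_false u : 2 <= size u -> bwt_bit (false :: u) = xnor_last2 u.
Proof. by move=> u2; rewrite /bwt_bit /= xnor_last2_cons //; case: (size u) u2. Qed.

Lemma bwt_bit_true u : 2 <= size u -> bwt_bit (true :: u) = bwt_bit u.
Proof.
move=> u2; rewrite /bwt_bit /= xnor_last2_cons // !eqseq_cons /=.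
by case: (size u) u2 => //= m _; rewrite eqseq_cons.
Qed.

Lemma map_xnor_last2_words k :
  map xnor_last2 (words k.+2) = flatten (nseq (2 ^ k) [:: true; false; false; true]).
Proof.
elim: k => // k IH; rewrite [words _]/= map_cat -!map_comp.
have cons_words b : {in words k.+2, xnor_last2 \o cons b =1 xnor_last2}.
  by move=> u /size_mem_words u_k /=; rewrite xnor_last2_cons // u_k.
rewrite ((eq_in_map _ _ _).1 (cons_words false)) ((eq_in_map _ _ _).1 (cons_words true)) IH.
by rewrite expnS mul2n -addnn nseqD flatten_cat.
Qed.

Lemma flatten_nseq_rcons m :
  rcons (flatten (nseq m [:: true; false; false; true])) true
  = true :: flatten (nseq m [:: false; false; true; true]).
Proof. by elim: m => //= m ->. Qed.

Lemma map_bwt_bit_words k : map bwt_bit (words k.+2) = cbwt_target k.+2.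
Proof.
elim: k => // k IH; rewrite [words _]/= map_cat -!map_comp.
have cons_false : {in words k.+2, bwt_bit \o cons false =1 xnor_last2}.
  by move=> u /size_mem_words u_k /=; rewrite bwt_bit_false // u_k.
have cons_true : {in words k.+2, bwt_bit \o cons true =1 bwt_bit}.
  by move=> u /size_mem_words u_k /=; rewrite bwt_bit_true // u_k.
rewrite ((eq_in_map _ _ _).1 cons_false) ((eq_in_map _ _ _).1 cons_true) IH.
rewrite map_xnor_last2_words /cbwt_target !subSS subn0 expnS mul2n -addnn.
rewrite -addnBA ?expn_gt0 // nseqD flatten_cat.
by rewrite catA cats1 flatten_nseq_rcons /= catA.
Qed.

(** * The Fibonacci register of T_k *)

Lemma size_lfsr x : 0 < size x -> size (lfsr x) = size x.
Proof. by rewrite /lfsr size_rcons size_behead; case: (size x). Qed.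

Lemma nth_lfsr x i : i < (size x).-1 -> nth false (lfsr x) i = nth false x i.+1.
Proof. by move=> lt_i; rewrite /lfsr nth_rcons size_behead lt_i nth_behead. Qed.

Lemma nth_lfsr_last x :
  nth false (lfsr x) (size x).-1 = nth false x 0 (+) nth false x 1.
Proof. by rewrite /lfsr nth_rcons size_behead ltnn eqxx. Qed.

Section LinearForm.
Local Open Scope ring_scope.

Definition bit (b : bool) : 'F_2 := b%:R.

Lemma bit_inj : injective bit. Proof. by case; case. Qed.

Lemma bitD a b : bit (a (+) b) = bit a + bit b.
Proof. by case: a; case: b; apply/val_inj. Qed.

Variables (p : {poly 'F_2}) (x : seq bool).

(* For p = T_k, the bits of the register sequence started from the state x
   are the values lin_form X^t. *)
Definition lin_form (q : {poly 'F_2}) : 'F_2 :=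
  \sum_(i < (size p).-1) (q %% p)`_i * bit (nth false x i).

Lemma lin_formZ c q : lin_form (c *: q) = c * lin_form q.
Proof.
by rewrite /lin_form mulr_sumr; apply: eq_bigr => i _; rewrite modpZl coefZ mulrA.
Qed.

Lemma lin_formD q r : lin_form (q + r) = lin_form q + lin_form r.
Proof.
by rewrite /lin_form -big_split; apply: eq_bigr => i _; rewrite modpD coefD mulrDl.
Qed.

HB.instance Definition _ :=
  GRing.isSemilinear.Build 'F_2 {poly 'F_2} 'F_2 *%R lin_form (lin_formZ, lin_formD).

Lemma lin_form_mod q : lin_form (q %% p) = lin_form q.
Proof. by rewrite /lin_form modp_id. Qed.

Lemma lin_form_mull q : lin_form (q * p) = 0.
Proof. by rewrite /lin_form big1 // => i _; rewrite modp_mull coef0 mul0r. Qed.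

Lemma lin_formXn i : (i < (size p).-1)%N -> lin_form 'X^i = bit (nth false x i).
Proof.
move=> lt_i; rewrite /lin_form modp_small ?size_polyXn -?ltn_predRL //.
rewrite (bigD1 (Ordinal lt_i)) //= coefXn eqxx mul1r big1 ?addr0 // => j ne_j.
by rewrite coefXn (negbTE (_ : j != i :> nat)) ?mul0r //; apply: contraNneq ne_j => /val_inj.
Qed.

Lemma lin_form_mul_Xn_sub1 d q : p != 0 ->
  (forall i, (i < (size p).-1)%N -> lin_form 'X^(d + i) = lin_form 'X^i) ->
  lin_form (('X^d - 1) * q) = 0.
Proof.
move=> p_nz shift_inv; rewrite -lin_form_mod -modp_mul lin_form_mod.
set r := q %% p; have size_r : (size r <= (size p).-1)%N.
  by rewrite -ltnS prednK ?size_poly_gt0 // ltn_modp.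
rewrite -[r]coefK poly_def mulr_sumr raddf_sum big1 //= => i _.
rewrite -scalerAr scalarZ mulrBl mul1r -exprD raddfB /= shift_inv ?subrr ?mulr0 //.
exact: leq_trans (ltn_ord i) size_r.
Qed.

End LinearForm.

Lemma size_iter_lfsr x m : 0 < size x -> size (iter m lfsr x) = size x.
Proof. by move=> x_pos; elim: m => //= m IH; rewrite size_lfsr IH. Qed.

Section TrinomialLFSR.
Local Open Scope ring_scope.

Variable k : nat.
Hypothesis k_ge2 : (2 <= k)%N.
Hypothesis T_prim : primitive_poly (trinomial k).
Local Notation T := (trinomial k).

Lemma size_trinomial : size T = k.+1.
Proof.
have size_XnX : size ('X^k + 'X : {poly 'F_2}) = k.+1.
  by rewrite size_polyDl size_polyXn // size_polyX ltnS.
by rewrite /trinomial size_polyDl size_XnX // size_poly1 ltnW.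
Qed.

Lemma trinomial_neq0 : T != 0.
Proof. by rewrite -size_poly_eq0 size_trinomial. Qed.

Lemma lin_form_rec x m :
  lin_form T x 'X^(m + k) = lin_form T x 'X^m + lin_form T x 'X^(m.+1).
Proof.
have oppF2 (c : 'F_2) : - c = c by apply: oppr_pchar2; apply: pchar_Fp.
have -> : ('X^(m + k) : {poly 'F_2}) = 'X^m * T - ('X^(m.+1) + 'X^m).
  by rewrite /trinomial exprD exprS; ring.
by rewrite raddfB /= lin_form_mull raddfD sub0r oppF2 addrC.
Qed.

Lemma bit_iter_lfsr x m i : size x = k -> (i < k)%N ->
  bit (nth false (iter m lfsr x) i) = lin_form T x 'X^(m + i).
Proof.
move=> x_k; have size_iter m' : size (iter m' lfsr x) = k.
  by rewrite size_iter_lfsr x_k //; lia.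
elim: m i => [|m IH] i lt_i; first by rewrite lin_formXn // size_trinomial.
have [lt_i1 | ge_i1] := ltnP i k.-1.
  by rewrite iterS nth_lfsr ?size_iter // IH ?addSnnS //; lia.
have -> : i = k.-1 by lia.
rewrite iterS -{1}(size_iter m) nth_lfsr_last bitD !IH; try lia.
by rewrite addn0 addn1 -lin_form_rec; congr (lin_form _ _ 'X^_); lia.
Qed.

Let T_irr : irreducible_poly T.
Proof. by case: T_prim; rewrite size_trinomial. Qed.

Let T_order : 'X^(2 ^ k - 1) %% T = 1 %% T.
Proof. by case: T_prim; rewrite size_trinomial. Qed.

Let T_order_min d : (0 < d < 2 ^ k - 1)%N -> 'X^d %% T != 1 %% T.
Proof.
by case/andP=> d_pos d_lt; case: T_prim => _ _; rewrite size_trinomial => /(_ d d_pos d_lt).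
Qed.

Lemma lfsr_period x : size x = k -> iter (2 ^ k - 1) lfsr x = x.
Proof.
move=> x_k; apply: (@eq_from_nth _ false) => [|i]; rewrite size_iter_lfsr ?x_k //; try lia.
move=> lt_i; apply: bit_inj; rewrite bit_iter_lfsr // -(@lin_formXn T x) ?size_trinomial //.
by rewrite -lin_form_mod exprD mulrC -modp_mul T_order modp_mul mulr1 lin_form_mod.
Qed.

(* The form attached to x vanishes on the ideal (X^d - 1), which is the unit
   ideal since T_k is irreducible and does not divide X^d - 1. *)
Lemma lfsr_aperiodic x d : size x = k -> (0 < d < 2 ^ k - 1)%N ->
  iter d lfsr x = x -> x = nseq k false.
Proof.
move=> x_k d_range x_per.
have shift_inv i : (i < (size T).-1)%N -> lin_form T x 'X^(d + i) = lin_form T x 'X^i.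
  rewrite size_trinomial => lt_i.
  by rewrite -bit_iter_lfsr // x_per lin_formXn ?size_trinomial.
have T_ndvd : ~~ (T %| 'X^d - 1).
  apply/negP => T_dvd; move/negP: (T_order_min d_range); apply.
  by rewrite -(subrK 1 'X^d) modpD (modp_eq0 T_dvd) add0r.
have /Bezout_eq1_coprimepP [[u v] /= uv1] : coprimep T ('X^d - 1).
  by rewrite irreducible_poly_coprime.
apply: (@eq_from_nth _ false) => [|i]; rewrite ?size_nseq // x_k => lt_i.
apply: bit_inj; rewrite nth_nseq lt_i -(@lin_formXn T x) ?size_trinomial //.
have -> : 'X^i = 'X^i * u * T + ('X^d - 1) * (v * 'X^i) by rewrite -[LHS]mulr1 -{1}uv1; ring.
by rewrite raddfD /= lin_form_mull lin_form_mul_Xn_sub1 ?trinomial_neq0 ?addr0.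
Qed.

Lemma lfsr_inj x y : size x = k -> size y = k -> lfsr x = lfsr y -> x = y.
Proof.
move=> x_k y_k eq_xy; rewrite -(lfsr_period x_k) -(lfsr_period y_k).
have -> : (2 ^ k - 1 = (2 ^ k - 2).+1)%N.
  by have := ltn_expl k (ltnSn 1); lia.
by rewrite !iterSr eq_xy.
Qed.

End TrinomialLFSR.

(** * The swapped register is a single cycle *)

Section Cycle.
Variables (T : eqType) (f : T -> T).

Lemma uniq_traject x n :
  (forall i j, i < j < n -> iter i f x != iter j f x) -> uniq (traject f x n).
Proof.
elim: n => // n IH iter_neq; rewrite trajectSr rcons_uniq IH ?andbT; last first.
  by move=> i j /andP [lt_ij lt_jn]; apply: iter_neq; rewrite lt_ij ltnW.
apply/negP => /trajectP [i lt_i iter_eq].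
by move: (iter_neq i n); rewrite lt_i ltnSn iter_eq eqxx => /(_ isT).
Qed.

Variables (x : T) (n : nat).
Hypothesis iter_n : iter n f x = x.
Hypothesis uniq_orbit : uniq (traject f x n).

Lemma iter_cycle_period y : y \in traject f x n -> iter n f y = y.
Proof. by case/trajectP=> j _ ->; rewrite -iterD addnC iterD iter_n. Qed.

Lemma iter_cycle_aperiodic y d : y \in traject f x n -> 0 < d < n -> iter d f y != y.
Proof.
case/trajectP=> j lt_j ->{y} /andP [d_pos lt_d]; apply/eqP => per.
have iter_d : iter d f x = x.
  have := congr1 (iter (n - j) f) per; rewrite -!iterD subnK ?(ltnW lt_j) //.
  have -> : n - j + d + j = d + n by lia.
  by rewrite iterD iter_n.
have d_lt : d < size (traject f x n) by rewrite size_traject.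
have n_pos : 0 < size (traject f x n) by rewrite size_traject (ltn_trans d_pos lt_d).
move: (nth_uniq x d_lt n_pos uniq_orbit); rewrite !nth_traject ?(ltn_trans d_pos lt_d) //.
by rewrite iter_d eqxx eqn0Ngt d_pos.
Qed.

End Cycle.

Definition unit_first (k : nat) : seq bool := true :: nseq k.-1 false.
Definition unit_last (k : nat) : seq bool := rcons (nseq k.-1 false) true.

Section SwappedLFSR.
Variable k : nat.
Hypothesis k_ge2 : 2 <= k.
Hypothesis T_prim : primitive_poly (trinomial k).
Local Notation n := (2 ^ k).
Local Notation zeros := (nseq k false).

Let k_pos : 0 < k. Proof. exact: ltnW. Qed.

Let n_gt2 : 2 < n.
Proof. by have := ltn_expl k (ltnSn 1); lia. Qed.

Lemma size_unit_first : size (unit_first k) = k.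
Proof. by rewrite /= size_nseq prednK. Qed.

Lemma size_unit_last : size (unit_last k) = k.
Proof. by rewrite size_rcons size_nseq prednK. Qed.

Lemma unit_first_neq0 : unit_first k != zeros.
Proof. by case: k k_pos. Qed.

Lemma unit_last_neq0 : unit_last k != zeros.
Proof.
apply/eqP => /(congr1 (nth false ^~ k.-1)).
by rewrite nth_rcons size_nseq ltnn eqxx nth_nseq; case: ifP.
Qed.

Lemma lfsr_unit_first : lfsr (unit_first k) = unit_last k.
Proof. by rewrite /lfsr /unit_first /unit_last /=; case: k k_ge2 => [|[|k']]. Qed.

Lemma lfsr_zeros : lfsr zeros = zeros.
Proof.
case: k k_pos => // k' _; rewrite /lfsr /= nth_nseq if_same /=.
by rewrite -cats1 (_ : [:: false] = nseq 1 false) // -nseqD addn1.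
Qed.

Lemma lfsr'_zeros : lfsr' k zeros = unit_last k.
Proof. by rewrite /lfsr' eqxx. Qed.

Lemma lfsr'_unit_first : lfsr' k (unit_first k) = zeros.
Proof. by rewrite /lfsr' (negbTE unit_first_neq0) eqxx. Qed.

Lemma lfsr'E x : x != zeros -> x != unit_first k -> lfsr' k x = lfsr x.
Proof. by rewrite /lfsr' => /negbTE -> /negbTE ->. Qed.

Lemma size_lfsr' x : size x = k -> size (lfsr' k x) = k.
Proof.
rewrite /lfsr'; case: ifP => _; first by rewrite size_unit_last.
by case: ifP => _ x_k; rewrite ?size_nseq // size_lfsr x_k.
Qed.

Lemma size_iter_lfsr' x m : size x = k -> size (iter m (lfsr' k) x) = k.
Proof. by move=> x_k; elim: m => //= m IH; rewrite size_lfsr'. Qed.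

Let orbit i := iter i lfsr (unit_last k).

Let size_orbit i : size (orbit i) = k.
Proof. by rewrite size_iter_lfsr size_unit_last. Qed.

Let orbit_neq0 i : orbit i != zeros.
Proof.
elim: i => [|i IH]; first exact: unit_last_neq0.
apply: contra IH => /eqP orbit_S; apply/eqP/(lfsr_inj k_ge2 T_prim) => //.
  by rewrite size_nseq.
by rewrite lfsr_zeros.
Qed.

Let orbit_inj i j : i < j < n - 1 -> orbit i != orbit j.
Proof.
case/andP=> lt_ij lt_j; apply/eqP => eq_ij; move/eqP: (orbit_neq0 i); apply.
have d_range : 0 < j - i < n - 1 by lia.
apply: (lfsr_aperiodic k_ge2 T_prim (size_orbit i) d_range).
by rewrite -iterD subnK ?(ltnW lt_ij).
Qed.

Let orbit_last : orbit (n - 2) = unit_first k.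
Proof.
apply: (lfsr_inj k_ge2 T_prim); rewrite ?size_unit_first // lfsr_unit_first.
rewrite -iterS -[in RHS](lfsr_period k_ge2 T_prim size_unit_last).
by have -> : n - 1 = (n - 2).+1 by lia.
Qed.

(* Along the F-orbit of 0^(k-1)1 the swap acts only at its last state. *)
Let iter_lfsr'_unit_last i : i <= n - 2 -> iter i (lfsr' k) (unit_last k) = orbit i.
Proof.
elim: i => // i IH lt_i; rewrite iterS IH 1?ltnW // lfsr'E ?orbit_neq0 //.
by rewrite -orbit_last orbit_inj //; lia.
Qed.

Lemma iter_lfsr'_zeros : iter n (lfsr' k) zeros = zeros.
Proof.
have -> : n = (n - 2).+2 by lia.
by rewrite iterSr lfsr'_zeros iterS iter_lfsr'_unit_last // orbit_last lfsr'_unit_first.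
Qed.

Lemma uniq_lfsr'_orbit : uniq (traject (lfsr' k) zeros n).
Proof.
have -> : n = (n - 1).+1 by lia.
rewrite trajectS /= lfsr'_zeros; apply/andP; split.
  apply/negP => /trajectP [i lt_i]; rewrite iter_lfsr'_unit_last; last by lia.
  by move/eqP; rewrite eq_sym (negbTE (orbit_neq0 i)).
apply: uniq_traject => i j lt_ij.
by rewrite !iter_lfsr'_unit_last ?orbit_inj //; lia.
Qed.

Lemma mem_lfsr'_orbit s : size s = k -> s \in traject (lfsr' k) zeros n.
Proof.
have orbit_words : perm_eq (traject (lfsr' k) zeros n) (words k).
  apply: perm_words uniq_lfsr'_orbit _ _; first by rewrite size_traject.
  by move=> _ /trajectP [i _ ->]; rewrite size_iter_lfsr' ?size_nseq.
by move=> s_k; rewrite (perm_mem orbit_words) -s_k mem_words.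
Qed.

Lemma lfsr'_period s : size s = k -> iter n (lfsr' k) s = s.
Proof.
by move/mem_lfsr'_orbit/(iter_cycle_period iter_lfsr'_zeros).
Qed.

Lemma lfsr'_aperiodic s d : size s = k -> 0 < d < n -> iter d (lfsr' k) s != s.
Proof.
by move/mem_lfsr'_orbit/(iter_cycle_aperiodic iter_lfsr'_zeros uniq_lfsr'_orbit); apply.
Qed.

End SwappedLFSR.

(** * Windows of M_k *)

Lemma nth_rot (T : Type) (x : T) (s : seq T) p i : p <= size s -> i < size s ->
  nth x (rot p s) i = nth x s ((p + i) %% size s).
Proof.
move=> le_p lt_i; rewrite nth_cat size_drop nth_drop.
case: ltnP => [lt_pi | ge_pi]; first by rewrite modn_small //; lia.
have -> : p + i = (i - (size s - p)) + size s by lia.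
by rewrite modnDr modn_small ?nth_take //; lia.
Qed.

Definition revcomp (u : seq bool) : seq bool := rev (map negb u).

Lemma revcompK : involutive revcomp.
Proof. by move=> u; rewrite /revcomp map_rev revK -map_comp (eq_map negbK) map_id. Qed.

Lemma size_revcomp u : size (revcomp u) = size u.
Proof. by rewrite /revcomp size_rev size_map. Qed.

Lemma nth_lfsr' k x i : size x = k -> i < k.-1 ->
  nth false (lfsr' k x) i = nth false x i.+1.
Proof.
move=> x_k lt_i; rewrite /lfsr'; case: ifP => [/eqP -> | _].
  by rewrite nth_rcons size_nseq lt_i !nth_nseq lt_i; case: ifP.
case: ifP => [/eqP -> | _]; first by rewrite /= !nth_nseq lt_i; case: ifP.
by rewrite nth_lfsr ?x_k.
Qed.

Lemma bwt_bitE k u : 2 <= k -> size u = k ->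
  bwt_bit u = ~~ nth false (lfsr' k (revcomp u)) k.-1.
Proof.
move=> k_ge2 u_k.
have ones : nseq k false = revcomp (nseq k true) by rewrite /revcomp map_nseq rev_nseq.
have ones_zero : true :: nseq k.-1 false = revcomp (rcons (nseq k.-1 true) false).
  by rewrite /revcomp map_rcons rev_rcons map_nseq rev_nseq.
rewrite /lfsr' /bwt_bit u_k ones ones_zero !(inj_eq (can_inj revcompK)).
case: ifP => _; first by rewrite nth_rcons size_nseq ltnn eqxx.
case: ifP => _; first by rewrite -ones nth_nseq; case: ifP.
have := nth_lfsr_last (revcomp u); rewrite size_revcomp u_k => ->.
rewrite /revcomp !nth_rev ?size_map u_k; try lia.
rewrite !(nth_map false) ?u_k /xnor_last2 ?u_k; try lia.
by rewrite subn1 (_ : k - 2 = k.-2); [case: (nth _ _ k.-1); case: (nth _ _ k.-2) | lia].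
Qed.

Section DeBruijnWord.
Variables (k : nat) (x0 : seq bool).
Hypothesis k_ge2 : 2 <= k.
Hypothesis T_prim : primitive_poly (trinomial k).
Hypothesis x0_k : size x0 = k.
Local Notation n := (2 ^ k).
Local Notation M := (Mk k x0).

Let state t := iter t (lfsr' k) x0.
Let out t := nth false (state t) 0.

Let k_lt_n : k < n. Proof. exact: ltn_expl. Qed.
Let n_pos : 0 < n. Proof. by rewrite expn_gt0. Qed.

Let size_state t : size (state t) = k.
Proof. exact: size_iter_lfsr'. Qed.

Let nth_state t i : i < k -> nth false (state t) i = out (t + i).
Proof.
elim: i t => [|i IH] t lt_i; first by rewrite addn0.
rewrite -(@nth_lfsr' k) ?size_state //; last by lia.
by rewrite (IH t.+1) ?addSnnS //; lia.
Qed.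

Let state_period t : state (n + t) = state t.
Proof. by rewrite /state iterD lfsr'_period ?size_state. Qed.

Let out_period t : out (n + t) = out t.
Proof. by rewrite /out state_period. Qed.

Let state_neq t t' : t < t' < t + n -> state t != state t'.
Proof.
case/andP=> lt_t lt_t'; rewrite eq_sym /state -(subnK (ltnW lt_t)) iterD.
apply: lfsr'_aperiodic; rewrite ?size_state //; lia.
Qed.

Lemma size_Mk : size M = n.
Proof. by rewrite /Mk size_map size_rev size_map size_iota. Qed.

(* Times are shifted by 2n so that the truncated subtractions are exact. *)
Let nth_rot_Mk p i : p < n -> i < n -> nth false (rot p M) i = ~~ out (2 * n - (p + i).+1).
Proof.
move=> lt_p lt_i; rewrite nth_rot size_Mk ?(ltnW lt_p) //.
have lt_mod : (p + i) %% n < n by rewrite ltn_mod expn_gt0.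
rewrite /Mk (nth_map false) ?size_rev ?size_map ?size_iota //.
rewrite nth_rev ?size_map ?size_iota // (nth_map 0) ?size_iota; last by lia.
rewrite nth_iota ?add0n -/(state _) -/(out _); last by lia.
case: (ltnP (p + i) n) => [lt_pi | ge_pi].
  by rewrite modn_small // -out_period; congr (~~ out _); lia.
have -> : p + i = (p + i - n) + n by lia.
by rewrite modnDr modn_small; [congr (~~ out _); lia | lia].
Qed.

Let window_Mk p : p < n -> take k (rot p M) = revcomp (state (2 * n - p - k)).
Proof.
move=> lt_p; apply: (@eq_from_nth _ false) => [|i].
  by rewrite size_take size_rot size_Mk k_lt_n size_revcomp size_state.
rewrite size_take size_rot size_Mk k_lt_n => lt_i.
rewrite nth_take // nth_rot_Mk //; last by lia.
rewrite /revcomp nth_rev ?size_map ?size_state // (nth_map false) ?size_state; last by lia.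
rewrite nth_state; last by lia.
by congr (~~ out _); lia.
Qed.

Let last_rot_Mk p : p < n ->
  last false (rot p M) = ~~ nth false (lfsr' k (state (2 * n - p - k))) k.-1.
Proof.
move=> lt_p; rewrite -nth_last size_rot size_Mk nth_rot_Mk //; last by lia.
change (lfsr' k (state ?t)) with (state t.+1); rewrite nth_state; last by lia.
have -> : (2 * n - p - k).+1 + k.-1 = n + (n - p) by lia.
by rewrite out_period; congr (~~ out _); lia.
Qed.

Lemma uniq_windows_Mk : uniq [seq take k (rot p M) | p <- iota 0 (size M)].
Proof.
rewrite size_Mk map_inj_in_uniq ?iota_uniq // => p q; rewrite !mem_iota !add0n.
move=> lt_p lt_q; rewrite !window_Mk // => /(can_inj revcompK)/eqP.
apply: contraTeq; case: (ltngtP p q) => // [lt_pq | lt_qp] _.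
  by rewrite eq_sym; apply: state_neq; lia.
by apply: state_neq; lia.
Qed.

Lemma bwt_bit_window_Mk p : p < size M ->
  bwt_bit (take k (rot p M)) = last false (rot p M).
Proof.
rewrite size_Mk => lt_p.
by rewrite window_Mk // (bwt_bitE k_ge2) ?size_revcomp ?size_state // revcompK last_rot_Mk.
Qed.

End DeBruijnWord.

Theorem theorem2 (k : nat) (x0 : seq bool) :
  2 <= k -> primitive_poly (trinomial k) -> size x0 = k ->
  cBWT (Mk k x0) = cbwt_target k.
Proof.
move=> k_ge2 T_prim x0_k.
rewrite (cBWT_de_bruijn (size_Mk k x0) (uniq_windows_Mk k_ge2 T_prim x0_k)
                         (bwt_bit_window_Mk k_ge2 T_prim x0_k)).
by case: k k_ge2 {T_prim x0_k} => [|[|k]] // _; rewrite map_bwt_bit_words.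
Qed.
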